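(* Let $(\Omega_i,\rho_i)$ be a classical model of the information structure $(\mathcal S_i,E_i)$ for $i=1,2$. Then (1) $(\Omega_1\times\Omega_2,\rho_\times)$ is a classical model of the product $(\mathcal S_1,E_1)\times(\mathcal S_2,E_2)$, where $\rho_\times(\langle X_1,X_2\rangle)=\rho_1(X_1)\times\rho_2(X_2)$; and (2) $(\Omega_1\times\Omega_2,\rho_{\amalg})$ is a classical model of the coproduct $(\mathcal S_1,E_1)\amalg(\mathcal S_2,E_2)$, where $\rho_\amalg(\mathbf 1)=\{\Omega_1\times\Omega_2\}$, $\rho_\amalg(X)=\rho_1(X)\times\{\Omega_2\}$ for $X\in\mathrm{Ob}\,\mathcal S_1\setminus\{\mathbf 1\}$ and $\rho_\amalg(X)=\{\Omega_1\}\times\rho_2(X)$ for $X\in\mathrm{Ob}\,\mathcal S_2\setminus\{\mathbf 1\}$.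
   Context: An information structure is a pair $(\mathcal S,E)$, $\mathcal S$ a small category and $E:\mathcal S\to\mathcal{Sets}$ a functor, such that: $\mathcal S$ has a terminal object $\mathbf 1$; $\mathcal S$ is a poset; its nerve is finite dimensional; if $Z\to X$ and $Z\to Y$ then $X\wedge Y$ exists; $E(\mathbf 1)$ is a singleton; for $\pi:X\to Y$, $X\ne Y$, $E(\pi)$ is surjective with $|E(X)|>|E(Y)|$; for every product diagram $X\xleftarrow{\pi}X\wedge Y\xrightarrow{\sigma}Y$ and $(x,y)$, $|E(\pi)^{-1}(x)\cap E(\sigma)^{-1}(y)|\le1$; every $x\in E(X)$ is the $X$-component of some element of $\lim E$. The product $(\mathcal S_1,E_1)\times(\mathcal S_2,E_2)=(\mathcal S,E)$ has objects the pairs $\langle X_1,X_2\rangle$, an arrow $\langle X_1,X_2\rangle\to\langle Y_1,Y_2\rangle$ iff $X_i\to Y_i$ for $i=1,2$, and $E(\langle X_1,X_2\rangle)=E_1(X_1)\times E_2(X_2)$, $E(\langle\pi_1,\pi_2\rangle)=E_1(\pi_1)\times E_2(\pi_2)$. The coproduct has as poset of objects $\mathrm{Ob}\,\mathcal S_1\sqcup\mathrm{Ob}\,\mathcal S_2$ with the two terminal objects identified (arrows those of $\mathcal S_1$ or of $\mathcal S_2$), and $E(X)=E_i(X)$ for $X\in\mathrm{Ob}\,\mathcal S_i$. For a set $\Omega$, $\mathcal O(\Omega)$ is the category of finite partitions of $\Omega$ with $X\to Y$ iff $X$ refines $Y$; the product $XY$ of partitions is their coarsest common refinement. For families $\mathcal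 A,\mathcal B$ of subsets of $\Omega_1,\Omega_2$, $\mathcal A\times\mathcal B=\{A\times B: A\in\mathcal A, B\in\mathcal B\}$. A classical model of $(\mathcal S,E)$ is $(\Omega,\rho)$ with $\rho:\mathcal S\to\mathcal O(\Omega)$ a functor injective on objects, bijections $E(X)\simeq\rho(X)$ for all $X$, and $\rho(X\wedge Y)=\rho(X)\rho(Y)$ whenever $X\wedge Y$ exists. *)

From mathcomp Require Import all_boot.
From mathcomp Require Import boolp classical_sets cardinality.
Set Implicit Arguments.
Unset Strict Implicit.
Unset Printing Implicit Defensive.
Local Open Scope classical_set_scope.

(* A poset category given by a boolean order relation [le] (X -> Y iff le X Y),
   with a distinguished object [top], and a functor E into Types.
   Since [le] is boolean, arrows are unique (proof irrelevance of bool). *)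
Record infoStr := InfoStr {
  ob : Type;
  le : ob -> ob -> bool;
  top : ob;
  E : ob -> Type;
  Emap : forall X Y : ob, le X Y -> E X -> E Y }.

Definition is_meet (S : infoStr) (X Y M : ob S) : Prop :=
  le M X /\ le M Y /\ forall Z, le Z X -> le Z Y -> le Z M.

Definition card_lt (A B : Type) : Prop :=
  (exists f : A -> B, injective f) /\ ~ (exists g : B -> A, injective g).

(* Limit of E: compatible families. *)
Definition is_section (S : infoStr) (s : forall X : ob S, E X) : Prop :=
  forall X Y (h : le X Y), Emap h (s X) = s Y.

Definition is_info_structure (S : infoStr) : Prop :=
  (forall X : ob S, le X X) /\
  (forall X Y Z : ob S, le X Y -> le Y Z -> le X Z) /\
  (forall X Y : ob S, le X Y -> le Y X -> X = Y) /\
  (forall (X : ob S) (h : le X X) (x : E X), Emap h x = x) /\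
  (forall X Y Z : ob S, forall (h1 : le X Y) (h2 : le Y Z) (h3 : le X Z) (x : E X),
      Emap h3 x = Emap h2 (Emap h1 x)) /\
  (forall X : ob S, le X (top S)) /\
  (* finite dimensional nerve: no strict chain with more than n arrows *)
  (exists n : nat, forall c : nat -> ob S,
      ~ (forall i, i < n.+1 -> le (c i.+1) (c i) /\ c i.+1 <> c i)) /\
  (forall X Y Z : ob S, le Z X -> le Z Y -> exists M, is_meet X Y M) /\
  (exists e : E (top S), forall e', e' = e) /\
  (forall (X Y : ob S) (h : le X Y), X <> Y ->
      (forall y : E Y, exists x : E X, Emap h x = y) /\ card_lt (E Y) (E X)) /\
  (* product diagrams: at most one element over each pair *)
  (forall (X Y M : ob S) (hX : le M X) (hY : le M Y), is_meet X Y M ->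
      forall (x : E X) (y : E Y) (m m' : E M),
        Emap hX m = x -> Emap hY m = y -> Emap hX m' = x -> Emap hY m' = y ->
        m = m') /\
  (forall (X : ob S) (x : E X), exists s : forall Z : ob S, E Z, is_section s /\ s X = x).

Definition prodIS (S1 S2 : infoStr) : infoStr :=
  @InfoStr (ob S1 * ob S2)
    (fun a b => le a.1 b.1 && le a.2 b.2)
    (top S1, top S2)
    (fun a => (E a.1 * E a.2)%type)
    (fun a b h e =>
       (Emap (proj1 (andb_prop _ _ h)) e.1, Emap (proj2 (andb_prop _ _ h)) e.2)).

(* Objects: the common terminal object [None], the non-terminal objects of S1
   ([inl]) and the non-terminal objects of S2 ([inr]). *)
Definition cob (S1 S2 : infoStr) : Type :=
  option ({X : ob S1 | X <> top S1} + {Y : ob S2 | Y <> top S2}).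

Definition cle (S1 S2 : infoStr) (a b : cob S1 S2) : bool :=
  match a, b with
  | _, None => true
  | Some (inl x), Some (inl x') => le (proj1_sig x) (proj1_sig x')
  | Some (inr y), Some (inr y') => le (proj1_sig y) (proj1_sig y')
  | _, _ => false
  end.

(* E on the coproduct; E(1) is E1(1) (a singleton, identified with E2(1)). *)
Definition cE (S1 S2 : infoStr) (a : cob S1 S2) : Type :=
  match a with
  | None => E (top S1)
  | Some (inl x) => E (proj1_sig x)
  | Some (inr y) => E (proj1_sig y)
  end.

Definition cEmap (S1 S2 : infoStr) (h1 : forall X : ob S1, le X (top S1))
  (to1 : forall Y : ob S2, E Y -> E (top S1)) :
  forall a b : cob S1 S2, cle a b -> cE a -> cE b :=
  fun a b =>
  match a as a0, b as b0 return cle a0 b0 -> cE a0 -> cE b0 with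
  | None, None => fun _ e => e
  | Some (inl x), None => fun _ e => Emap (h1 (proj1_sig x)) e
  | Some (inr y), None => fun _ e => to1 (proj1_sig y) e
  | Some (inl x), Some (inl x') => fun h e => Emap h e
  | Some (inr y), Some (inr y') => fun h e => Emap h e
  | None, Some (inl _) => fun h _ => False_rect _ (ltac:(discriminate h))
  | None, Some (inr _) => fun h _ => False_rect _ (ltac:(discriminate h))
  | Some (inl _), Some (inr _) => fun h _ => False_rect _ (ltac:(discriminate h))
  | Some (inr _), Some (inl _) => fun h _ => False_rect _ (ltac:(discriminate h))
  end.

(* Its definition needs the arrows X -> 1 of S1 and
   (the unique) maps E2(Y) -> E1(1) into the singleton E1(1); these are supplied
   as data (they exist and are unique for information structures). *)
Definition coprodIS (S1 S2 : infoStr) (h1 : forall X : ob S1, le X (top S1))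
  (to1 : forall Y : ob S2, E Y -> E (top S1)) : infoStr :=
  @InfoStr (cob S1 S2) (@cle S1 S2) None (@cE S1 S2) (cEmap h1 to1).

Definition is_fpartition (Omega : Type) (P : set (set Omega)) : Prop :=
  finite_set P /\
  (forall A, P A -> A <> set0) /\
  (forall A B, P A -> P B -> A `&` B <> set0 -> A = B) /\
  (forall w : Omega, exists A, P A /\ A w).

Definition refines (Omega : Type) (P Q : set (set Omega)) : Prop :=
  forall A, P A -> exists B, Q B /\ A `<=` B.

Definition pprod (Omega : Type) (P Q : set (set Omega)) : set (set Omega) :=
  [set C | exists A B, P A /\ Q B /\ C = A `&` B /\ C <> set0].

Definition famX (O1 O2 : Type) (A : set (set O1)) (B : set (set O2))
  : set (set (O1 * O2)) :=
  [set C | exists a b, A a /\ B b /\ C = a `*` b].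

Definition classical_model (S : infoStr) (Omega : Type)
  (rho : ob S -> set (set Omega)) : Prop :=
  (forall X, is_fpartition (rho X)) /\
  (forall X Y, le X Y -> refines (rho X) (rho Y)) /\
  injective rho /\
  (forall X, exists f : E X -> set Omega,
      injective f /\ (forall x, rho X (f x)) /\
      (forall A, rho X A -> exists x, f x = A)) /\
  (forall X Y M, is_meet X Y M -> rho M = pprod (rho X) (rho Y)).

Definition rho_prod (S1 S2 : infoStr) (O1 O2 : Type)
  (rho1 : ob S1 -> set (set O1)) (rho2 : ob S2 -> set (set O2))
  : ob (prodIS S1 S2) -> set (set (O1 * O2)) :=
  fun a => famX (rho1 a.1) (rho2 a.2).

Definition rho_coprod (S1 S2 : infoStr) (O1 O2 : Type)
  (rho1 : ob S1 -> set (set O1)) (rho2 : ob S2 -> set (set O2))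
  : cob S1 S2 -> set (set (O1 * O2)) :=
  fun a => match a with
  | None => [set setT]
  | Some (inl x) => famX (rho1 (proj1_sig x)) [set setT]
  | Some (inr y) => famX [set setT] (rho2 (proj1_sig y))
  end.

From mathcomp Require Import all_boot.
From mathcomp Require Import boolp classical_sets cardinality.

(* Blocks of a product of partitions are rectangles, and a nonempty rectangle
   determines its sides; since meets in the product poset are componentwise and
   (A x B) n (A' x B') = (A n A') x (B n B'), rho_prod is a classical model.
   As E(1) is a singleton, rho_i(1) = {Omega_i}, so rho_coprod is rho_prod
   composed with the embedding X |-> <X,1>, Y |-> <1,Y> of the coproduct into
   the product.  That embedding is injective, monotone, preserves meets and
   preserves E up to bijection, and classical models pull back along such
   maps. *)

Set Implicit Arguments.
Unset Strict Implicit.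
Unset Printing Implicit Defensive.
Local Open Scope classical_set_scope.

Lemma neq0P (T : Type) (A : set T) : A <> set0 <-> A !=set0.
Proof. by rewrite -set0P; split=> /eqP. Qed.

Lemma bij_pair_r (A B : Type) (b : B) :
  (forall b', b' = b) -> bijective (fun a : A => (a, b)).
Proof. by move=> bE; exists fst => // -[a b'] /=; rewrite (bE b'). Qed.

Lemma bij_pair_l (A B : Type) (a : A) :
  (forall a', a' = a) -> bijective (fun b : B => (a, b)).
Proof. by move=> aE; exists snd => // -[a' b] /=; rewrite (aE a'). Qed.

Section InfoStructure.
Variable S : infoStr.
Hypothesis IS : is_info_structure S.

Lemma info_le_refl (X : ob S) : le X X.
Proof. by case: IS. Qed.

Lemma info_le_trans (X Y Z : ob S) : le X Y -> le Y Z -> le X Z.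
Proof. by case: IS => _ [+ _]; apply. Qed.

Lemma info_le_anti (X Y : ob S) : le X Y -> le Y X -> X = Y.
Proof. by case: IS => _ [_ [+ _]]; apply. Qed.

Lemma info_le_top (X : ob S) : le X (top S).
Proof. by case: IS => _ [_ [_ [_ [_ [+ _]]]]]; apply. Qed.

Lemma info_top_singleton : exists e : E (top S), forall e', e' = e.
Proof. by case: IS => _ [_ [_ [_ [_ [_ [_ [_ [+ _]]]]]]]]. Qed.

Lemma info_le_neq_top (X Y : ob S) : le X Y -> Y <> top S -> X <> top S.
Proof.
move=> XY Ytop Xtop; apply: Ytop.
by apply: info_le_anti (info_le_top _) _; rewrite -Xtop.
Qed.

End InfoStructure.

Section Partitions.
Variable Omega : Type.
Implicit Types (P : set (set Omega)) (A : set Omega).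

Lemma fpartition_block_neq0 P A : is_fpartition P -> P A -> A !=set0.
Proof. by case=> _ [P0 _] /P0/neq0P. Qed.

Lemma fpartition_neq0 P (w : Omega) : is_fpartition P -> P !=set0.
Proof. by case=> _ [_ [_ /(_ w) [A [PA _]]]]; exists A. Qed.

End Partitions.

Section ProductFamilies.
Variables O1 O2 : Type.
Implicit Types (a : set O1) (b : set O2) (A : set (set O1)) (B : set (set O2)).

Lemma setX_inj a a' b b' :
  a !=set0 -> b !=set0 -> a `*` b = a' `*` b' -> a = a' /\ b = b'.
Proof.
move=> [u au] [v bv] eab.
have mem x y : a x /\ b y <-> a' x /\ b' y.
  by have := congr1 (fun C => C (x, y)) eab => /= ->.
have [a'u b'v] := (mem u v).1 (conj au bv).
split; apply/seteqP; split=> x.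
- by move=> ax; case: ((mem x v).1 (conj ax bv)).
- by move=> a'x; case: ((mem x v).2 (conj a'x b'v)).
- by move=> bx; case: ((mem u x).1 (conj au bx)).
- by move=> b'x; case: ((mem u x).2 (conj a'u b'x)).
Qed.

Lemma famXE A B : famX A B = [set a `*` b | a in A & b in B].
Proof.
apply/seteqP; split=> C /=.
- by move=> [a [b [Aa [Bb ->]]]]; exists a => //; exists b.
- by move=> [a Aa [b Bb <-]]; exists a, b.
Qed.

Lemma famX1 a b : famX [set a] [set b] = [set a `*` b].
Proof.
apply/seteqP; split=> C /=; first by move=> [_ [_ [-> [-> ->]]]].
by move=> ->; exists a, b.
Qed.

Lemma famX_fpartition A B :
  is_fpartition A -> is_fpartition B -> is_fpartition (famX A B).
Proof.
move=> [finA [A0 [disjA covA]]] [finB [B0 [disjB covB]]].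
split; [|split; [|split]].
- by rewrite famXE; apply: finite_image2.
- move=> _ [a [b [Aa [Bb ->]]]]; apply/neq0P.
  have [u au] := (neq0P a).1 (A0 _ Aa); have [v bv] := (neq0P b).1 (B0 _ Bb).
  by exists (u, v).
- move=> _ _ [a [b [Aa [Bb ->]]]] [a' [b' [Aa' [Bb' ->]]]].
  move=> /neq0P [[u v] [[/= au bv] [/= a'u b'v]]].
  have -> : a = a' by apply: disjA => //; apply/neq0P; exists u.
  by have -> : b = b' by apply: disjB => //; apply/neq0P; exists v.
- move=> [u v]; have [a [Aa au]] := covA u; have [b [Bb bv]] := covB v.
  by exists (a `*` b); split => //; exists a, b.
Qed.

Lemma famX_refines A A' B B' :
  refines A A' -> refines B B' -> refines (famX A B) (famX A' B').
Proof.
move=> AA' BB' _ [a [b [Aa [Bb ->]]]].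
have [a' [A'a' aa']] := AA' a Aa; have [b' [B'b' bb']] := BB' b Bb.
by exists (a' `*` b'); split; [exists a', b' | exact: setSX].
Qed.

Lemma famX_subset A A' B B' :
  is_fpartition A -> is_fpartition B -> A !=set0 -> B !=set0 ->
  famX A B `<=` famX A' B' -> A `<=` A' /\ B `<=` B'.
Proof.
move=> pA pB [a0 Aa0] [b0 Bb0] AB.
have sides a b : A a -> B b -> A' a /\ B' b.
  move=> Aa Bb; have : famX A B (a `*` b) by exists a, b.
  move=> /AB [a' [b' [A'a' [B'b' eab]]]].
  have a_neq0 := fpartition_block_neq0 pA Aa.
  have b_neq0 := fpartition_block_neq0 pB Bb.
  by have [-> ->] := setX_inj a_neq0 b_neq0 eab.
by split=> [a Aa | b Bb]; [exact: (sides a b0 Aa Bb0).1 | exact: (sides a0 b Aa0 Bb).2].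
Qed.

Lemma famX_inj A A' B B' (w1 : O1) (w2 : O2) :
  is_fpartition A -> is_fpartition A' -> is_fpartition B -> is_fpartition B' ->
  famX A B = famX A' B' -> A = A' /\ B = B'.
Proof.
move=> pA pA' pB pB' AB.
have [|AA' BB'] := famX_subset (A' := A') (B' := B') pA pB
  (fpartition_neq0 w1 pA) (fpartition_neq0 w2 pB); first by rewrite AB.
have [|A'A B'B] := famX_subset (A' := A) (B' := B) pA' pB'
  (fpartition_neq0 w1 pA') (fpartition_neq0 w2 pB'); first by rewrite AB.
by split; apply/seteqP.
Qed.

Lemma famX_pprod A A' B B' :
  famX (pprod A A') (pprod B B') = pprod (famX A B) (famX A' B').
Proof.
apply/seteqP; split=> C.
- move=> [_ [_ [[a [a' [Aa [Aa' [-> /neq0P [u aa'u]]]]]]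
             [[b [b' [Bb [Bb' [-> /neq0P [v bb'v]]]]]] ->]]]].
  exists (a `*` b), (a' `*` b'); split; first by exists a, b.
  split; first by exists a', b'.
  by split; [rewrite setXI | apply/neq0P; exists (u, v)].
- move=> [_ [_ [[a [b [Aa [Bb ->]]]] [[a' [b' [Aa' [Bb' ->]]]] [->]]]]].
  move=> /neq0P [[u v] [[/= au bv] [/= a'u b'v]]].
  exists (a `&` a'), (b `&` b'); split.
    by exists a, a'; do 3 split => //; apply/neq0P; exists u.
  split; last by rewrite setXI.
  by exists b, b'; do 3 split => //; apply/neq0P; exists v.
Qed.

End ProductFamilies.

Section ClassicalModel.
Variables (S : infoStr) (Omega : Type) (rho : ob S -> set (set Omega)).
Hypothesis CM : classical_model rho.

Lemma classical_model_inhabited (X : ob S) : E X -> inhabited Omega.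
Proof.
case: CM => P [_ [_ [/(_ X) [f [_ [fX _]]] _]]] e.
by have [w _] := fpartition_block_neq0 (P X) (fX e).
Qed.

Lemma classical_model_singleton (X : ob S) (e : E X) :
  (forall e', e' = e) -> rho X = [set setT].
Proof.
case: CM => /(_ X) [_ [_ [_ covX]]] [_ [_ [/(_ X) [f [_ [fX fonto]]] _]]] eE.
have blockE A : rho X A -> A = f e by move=> /fonto [x <-]; rewrite (eE x).
have feT : f e = setT.
  by apply/seteqP; split=> // w _; have [A [/blockE <-]] := covX w.
by apply/seteqP; split=> A; [move=> /blockE -> | move=> ->]; rewrite -?feT.
Qed.

End ClassicalModel.

Lemma classical_model_comp (T S : infoStr) (Omega : Type)
    (rho : ob S -> set (set Omega)) (j : ob T -> ob S) :
  injective j -> {homo j : a b / le a b} ->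
  (forall a b m, is_meet a b m -> is_meet (j a) (j b) (j m)) ->
  (forall a, exists g : E a -> E (j a), bijective g) ->
  classical_model rho -> classical_model (rho \o j).
Proof.
move=> jI jle jmeet jE [P [R [I [B M]]]].
split; [|split; [|split; [|split]]].
- by move=> a; apply: P.
- by move=> a b /jle; apply: R.
- by move=> a b /I /jI.
- move=> a; have [g [g' gK g'K]] := jE a; have [f [fI [fX fonto]]] := B (j a).
  exists (f \o g); split; [|split].
  + exact: inj_comp fI (can_inj gK).
  + by move=> x; apply: fX.
  + by move=> A /fonto [y <-]; exists (g' y); rewrite /= g'K.
- by move=> a b m /jmeet /M.
Qed.

Lemma is_meet_prodIS (S1 S2 : infoStr) (x y m : ob (prodIS S1 S2)) :
  is_meet x y m -> is_meet x.1 y.1 m.1 /\ is_meet x.2 y.2 m.2.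
Proof.
case: x y m => [x1 x2] [y1 y2] [m1 m2] [/andP [mx1 mx2] [/andP [my1 my2] glb]].
split; split=> //; split=> // Z Zx Zy.
- by have /andP [] := glb (Z, m2) (introT andP (conj Zx mx2)) (introT andP (conj Zy my2)).
- by have /andP [] := glb (m1, Z) (introT andP (conj mx1 Zx)) (introT andP (conj my1 Zy)).
Qed.

Lemma classical_model_prod (S1 S2 : infoStr) (O1 O2 : Type)
    (rho1 : ob S1 -> set (set O1)) (rho2 : ob S2 -> set (set O2))
    (w1 : O1) (w2 : O2) :
  classical_model rho1 -> classical_model rho2 ->
  classical_model (rho_prod rho1 rho2).
Proof.
move=> [P1 [R1 [I1 [B1 M1]]]] [P2 [R2 [I2 [B2 M2]]]].
split; [|split; [|split; [|split]]].
- by move=> X; apply: famX_fpartition.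
- by move=> X Y /andP [XY1 XY2]; apply: famX_refines; [apply: R1 | apply: R2].
- move=> [x1 x2] [y1 y2] /(famX_inj w1 w2 (P1 x1) (P1 y1) (P2 x2) (P2 y2)).
  by case=> /I1 -> /I2 ->.
- move=> [x1 x2]; have [f [fI [fX fonto]]] := B1 x1.
  have [g [gI [gX gonto]]] := B2 x2.
  exists (fun e => f e.1 `*` g e.2); split; [|split].
  + move=> [e1 e2] [e1' e2'] /=.
    move=> /(setX_inj (fpartition_block_neq0 (P1 x1) (fX e1))
                      (fpartition_block_neq0 (P2 x2) (gX e2))).
    by case=> /fI -> /gI ->.
  + by move=> [e1 e2]; exists (f e1), (g e2).
  + by move=> _ [a [b [/fonto [e1 <-] [/gonto [e2 <-] ->]]]]; exists (e1, e2).
- move=> x y m /is_meet_prodIS [m1 m2].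
  by rewrite /rho_prod (M1 _ _ _ m1) (M2 _ _ _ m2) famX_pprod.
Qed.

Definition coprod_emb (S1 S2 : infoStr) (a : cob S1 S2) : ob (prodIS S1 S2) :=
  match a with
  | None => (top S1, top S2)
  | Some (inl x) => (proj1_sig x, top S2)
  | Some (inr y) => (top S1, proj1_sig y)
  end.

Lemma rho_coprod_emb (S1 S2 : infoStr) (O1 O2 : Type)
    (rho1 : ob S1 -> set (set O1)) (rho2 : ob S2 -> set (set O2)) :
  rho1 (top S1) = [set setT] -> rho2 (top S2) = [set setT] ->
  rho_coprod rho1 rho2 = rho_prod rho1 rho2 \o @coprod_emb S1 S2.
Proof.
move=> top1 top2; apply/funext => -[[x|y]|] /=; rewrite /rho_prod /= ?top1 ?top2 //.
by rewrite famX1 setXTT.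
Qed.

Section CoproductEmbedding.
Variables (S1 S2 : infoStr) (h1 : forall X : ob S1, le X (top S1))
  (to1 : forall Y : ob S2, E Y -> E (top S1)).
Hypotheses (IS1 : is_info_structure S1) (IS2 : is_info_structure S2).
Local Notation C := (coprodIS h1 to1).

Lemma coprod_emb_inj : injective (@coprod_emb S1 S2).
Proof.
move=> [[[x xt]|[y yt]]|] [[[x' x't]|[y' y't]]|] //= [].
- by move=> xx'; congr (Some (inl _)); apply: eq_exist.
- by move/xt.
- by move/xt.
- by move=> /esym/x't.
- by move=> yy'; congr (Some (inr _)); apply: eq_exist.
- by move/yt.
- by move=> /esym/x't.
- by move=> /esym/y't.
Qed.

Lemma coprod_emb_homo (a b : ob C) :
  le a b -> le (coprod_emb a) (coprod_emb b).
Proof.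
case: a b => [[x|y]|] [[x'|y']|] //= ab.
all: by rewrite ?ab ?info_le_top ?info_le_refl.
Qed.

Lemma coprod_emb_lower_bound (a b m : ob C) (Z : ob (prodIS S1 S2)) :
  le m a -> le m b -> le Z (coprod_emb a) -> le Z (coprod_emb b) ->
  exists2 c : ob C, le c a /\ le c b & le Z (coprod_emb c).
Proof.
case: Z a b => Z1 Z2 [[[x xt]|[y yt]]|] [[[x' x't]|[y' y't]]|] ma mb Za Zb.
all: try by case: m ma mb => [[]|].
- case/andP: Za => /= Z1x _; case/andP: Zb => /= Z1x' _.
  exists (Some (inl (exist _ Z1 (info_le_neq_top IS1 Z1x xt)))) => //=.
  by rewrite (info_le_refl IS1) (info_le_top IS2).
- by exists (Some (inl (exist _ x xt))); rewrite //= info_le_refl.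
- case/andP: Za => /= _ Z2y; case/andP: Zb => /= _ Z2y'.
  exists (Some (inr (exist _ Z2 (info_le_neq_top IS2 Z2y yt)))) => //=.
  by rewrite (info_le_top IS1) (info_le_refl IS2).
- by exists (Some (inr (exist _ y yt))); rewrite //= info_le_refl.
- by exists (Some (inl (exist _ x' x't))); rewrite //= info_le_refl.
- by exists (Some (inr (exist _ y' y't))); rewrite //= info_le_refl.
- by exists None.
Qed.

Lemma coprod_emb_meet (a b m : ob C) :
  is_meet a b m -> is_meet (coprod_emb a) (coprod_emb b) (coprod_emb m).
Proof.
move=> [ma [mb glb]]; split; first exact: coprod_emb_homo.
split; first exact: coprod_emb_homo.
move=> [Z1 Z2] Za Zb.
have [c [ca cb] /andP [Zc1 Zc2]] := coprod_emb_lower_bound ma mb Za Zb.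
have /andP [cm1 cm2] := coprod_emb_homo (glb c ca cb).
by apply/andP; split; [exact: info_le_trans Zc1 cm1 | exact: info_le_trans Zc2 cm2].
Qed.

Lemma coprod_emb_bij (a : ob C) :
  exists g : E a -> E (coprod_emb a), bijective g.
Proof.
have [e1 e1E] := info_top_singleton IS1; have [e2 e2E] := info_top_singleton IS2.
case: a => [[x|y]|].
- by exists (fun e => (e, e2)); apply: bij_pair_r.
- by exists (fun e => (e1, e)); apply: bij_pair_l.
- by exists (fun e => (e, e2)); apply: bij_pair_r.
Qed.

End CoproductEmbedding.

Unset Implicit Arguments.
Set Strict Implicit.

Theorem proposition2p15 (S1 S2 : infoStr) (O1 O2 : Type)
  (rho1 : ob S1 -> set (set O1)) (rho2 : ob S2 -> set (set O2))
  (h1 : forall X : ob S1, le X (top S1))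
  (to1 : forall Y : ob S2, E Y -> E (top S1)) :
  is_info_structure S1 -> is_info_structure S2 ->
  classical_model rho1 -> classical_model rho2 ->
  classical_model (rho_prod rho1 rho2) /\
  classical_model (S := coprodIS h1 to1) (rho_coprod rho1 rho2).
Proof.
move=> IS1 IS2 CM1 CM2.
have [e1 e1E] := info_top_singleton IS1; have [e2 e2E] := info_top_singleton IS2.
have [w1] := classical_model_inhabited CM1 e1.
have [w2] := classical_model_inhabited CM2 e2.
have CMprod := classical_model_prod w1 w2 CM1 CM2.
split=> //.
rewrite (rho_coprod_emb (classical_model_singleton CM1 e1E)
                        (classical_model_singleton CM2 e2E)).
apply: (classical_model_comp (T := coprodIS h1 to1)) CMprod.
- exact: coprod_emb_inj.
- exact: coprod_emb_homo.
- exact: coprod_emb_meet.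
- exact: coprod_emb_bij.
Qed.
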